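(* Let $K$ be a field, $c\in K\setminus\{0\}$, $n\ge1$, let $f,g$ be $c$-friezes of order $n$ over $K$, and let $\Sigma\subseteq\mathbb{B}_n$ be a section. Suppose that $f(p)=g(p)$ for all $p\in\Sigma$ and that $f(p)\neq0$ for every $p=(i,j)\in\Sigma$ with $-1\le j-i\le n$ (i.e. every point of $\Sigma$ in rows $0,\dots,n+1$). Then $f=g$.
   Context: The $c$-continuant polynomials $P_k=P_k^c$ ($k\ge-1$) are defined by $P_{-1}=0$, $P_0=1$, and for $k\ge1$, $P_k(x_1,\dots,x_k)=x_kP_{k-1}(x_1,\dots,x_{k-1})+cP_{k-2}(x_1,\dots,x_{k-2})$. A family $(x_i)_{i\in\mathbb{Z}}$ in $K$ is $n$-admissible if $P_{n+2}(x_i,\dots,x_{i+n+1})=0$ for all $i$. Let $\mathbb{B}_n=\{(i,j)\in\mathbb{Z}^2:-2\le j-i\le n+1\}$; the point $(i,j)$ lies in row $j-i+1$ (rows $-1,\dots,n+2$). A $c$-frieze of order $n$ is a function $f:\mathbb{B}_n\to K$ for which there is an $n$-admissible family $(x_i)$ with $f(i,j)=P_{j-i+1}(x_i,\dots,x_j)$ for all $(i,j)\in\mathbb{B}_n$ (rows $-1$ and $n+2$ are identically $0$, row $0$ identically $1$). A section is a subset $\Sigma\subseteq\mathbb{B}_n$ with $|\Sigma|=n+4$ such that for every $(i_0,j_0)\in\Sigma$: (a) if $(i_0,j_0-1)$ and $(i_0+1,j_0)$ lie in $\mathbb{B}_n$, at least one of them is in $\Sigma$; (b) if $(i_0-1,j_0)$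 and $(i_0,j_0+1)$ lie in $\mathbb{B}_n$, at least one of them is in $\Sigma$. *)

From HB Require Import structures.
From mathcomp Require Import all_boot all_order all_algebra.
Set Implicit Arguments. Unset Strict Implicit. Unset Printing Implicit Defensive.
Import Order.TTheory GRing.Theory Num.Theory.
Local Open Scope ring_scope.

Section Continuants.
Variables (K : fieldType) (c : K).

(* cont_pair x k = (P_{k-1}(x_1..x_{k-1}), P_k(x_1..x_k)) where x_{t+1} := x t *)
Fixpoint cont_pair (x : nat -> K) (k : nat) : K * K :=
  match k with
  | 0%N => (0, 1)
  | k'.+1 => let: (a, b) := cont_pair x k' in (b, x k' * b + c * a)
  end.

Definition cont (s : seq K) : K := (cont_pair (fun t => nth 0 s t) (size s)).2.

Definition window (x : int -> K) (i : int) (m : nat) : seq K :=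
  [seq x (i + t%:Z) | t <- iota 0 m].

(* P_{j-i+1}(x_i, ..., x_j), with P_{-1} = 0 (and 0 for any negative index) *)
Definition fval (x : int -> K) (i j : int) : K :=
  match (j - i + 1)%R with
  | Posz m => cont (window x i m)
  | Negz _ => 0
  end.

Definition admissible (n : nat) (x : int -> K) : Prop :=
  forall i : int, cont (window x i n.+2) = 0.

End Continuants.

Definition inB (n : nat) (p : int * int) : bool :=
  ((-2 : int) <= p.2 - p.1) && (p.2 - p.1 <= n%:Z + 1).

(* c-frieze of order n: a function on B_n (values outside B_n are irrelevant) *)
Definition is_frieze (K : fieldType) (c : K) (n : nat) (f : int * int -> K) : Prop :=
  exists x : int -> K, admissible c n x /\
    forall p, inB n p -> f p = fval c x p.1 p.2.

Definition is_section (n : nat) (S : seq (int * int)) : Prop :=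
  [/\ uniq S, size S = (n + 4)%N, (forall p, p \in S -> inB n p) &
    forall i0 j0 : int, (i0, j0) \in S ->
      (inB n (i0, j0 - 1) -> inB n (i0 + 1, j0) ->
         ((i0, j0 - 1) \in S) || ((i0 + 1, j0) \in S)) /\
      (inB n (i0 - 1, j0) -> inB n (i0, j0 + 1) ->
         ((i0 - 1, j0) \in S) || ((i0, j0 + 1) \in S))].

(* The frieze is determined by its admissible family (x_i), and (x_i) is
   determined by any n+1 consecutive values: the relation P_{n+2} = 0 on a
   window is linear in its last entry with coefficient P_{n+1}, and also in
   its first entry, and P_{n+1} never vanishes since the Ptolemy relations
   give P_{n+1}(x_{i+1},...,x_{i+n+1}) P_{n+1}(x_i,...,x_n) = (-c)^{n+1}.
   A section contains a point in row 0 and then, by condition (b), a path of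
   section points climbing one row at a time (to (i-1,j) or (i,j+1)) up to
   row n+2.  If f and g agree on the triangle below a point (i,j) where f
   does not vanish, the Ptolemy relations through (i,j) extend agreement to
   the triangle below the next point of the path.  The triangle below the
   top point contains n+2 consecutive entries x_i of row 1. *)

From HB Require Import structures.
From mathcomp Require Import all_boot all_order all_algebra.
From mathcomp Require Import zify ring.
Import Order.TTheory GRing.Theory Num.Theory.
Local Open Scope ring_scope.
Set Implicit Arguments. Unset Strict Implicit. Unset Printing Implicit Defensive.

Section Continuants.
Variables (K : fieldType) (c : K).
Implicit Types (y z : nat -> K).

(* [pcont y m] is P_{m-1}(y 0, ..., y (m-2)); the offset lets index 0 stand
   for P_{-1} = 0. *)
Definition pcont y m := (cont_pair c y m).1.

Definition shift y k : nat -> K := fun t => y (k + t)%N.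

Lemma pcont0 y : pcont y 0 = 0. Proof. by []. Qed.

Lemma pcont1 y : pcont y 1 = 1. Proof. by []. Qed.

Lemma pcontS y m : pcont y m.+1 = (cont_pair c y m).2.
Proof. by rewrite /pcont /=; case: cont_pair. Qed.

Lemma pcontSS y m : pcont y m.+2 = y m * pcont y m.+1 + c * pcont y m.
Proof. by rewrite /pcont /=; case: cont_pair. Qed.

Lemma pcont2 y : pcont y 2 = y 0%N.
Proof. by rewrite pcontSS pcont1 pcont0 mulr1 mulr0 addr0. Qed.

Lemma eq_cont_pair y z m :
  (forall t, (t < m)%N -> y t = z t) -> cont_pair c y m = cont_pair c z m.
Proof.
elim: m => [|m IH] yz //=.
by rewrite IH ?yz // => t /ltnW; apply: yz.
Qed.

Lemma eq_pcont y z m :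
  (forall t, (t.+1 < m)%N -> y t = z t) -> pcont y m = pcont z m.
Proof. by case: m => [|m] yz //; rewrite !pcontS (eq_cont_pair yz). Qed.

Lemma pcont_det y a :
  pcont y a.+1 * pcont (shift y 1) a.+1 - pcont y a.+2 * pcont (shift y 1) a
  = (-c) ^+ a.
Proof.
elim: a => [|a IH]; first by rewrite !pcont1 pcont0 mulr0 subr0 mulr1 expr0.
by rewrite (pcontSS y a.+1) (pcontSS (shift y 1) a) exprS -IH /shift add1n; ring.
Qed.

Lemma pcont_ptolemyL y a t :
  pcont y a.+1 * pcont (shift y 1) (a + t) - pcont y (a + t).+1 * pcont (shift y 1) a
  = (-c) ^+ a * pcont (shift y a.+1) t.
Proof.
pose D t := pcont y a.+1 * pcont (shift y 1) (a + t)
            - pcont y (a + t).+1 * pcont (shift y 1) a.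
suff: D t = (-c) ^+ a * pcont (shift y a.+1) t /\
      D t.+1 = (-c) ^+ a * pcont (shift y a.+1) t.+1 by case.
elim: t => [|t [IH1 IH2]].
  by rewrite /D addn0 addn1 subrr pcont0 mulr0 pcont_det pcont1 mulr1.
split=> //.
have recD : D t.+2 = y (a + t).+1 * D t.+1 + c * D t.
  rewrite /D !addnS (pcontSS (shift y 1)) (pcontSS y) /shift add1n.
  by rewrite -/(shift y 1); ring.
rewrite recD IH1 IH2 (pcontSS (shift y a.+1)) /shift addSn -addnS; ring.
Qed.

Lemma pcont_ptolemyR y u d :
  pcont (shift y u) d.+1 * pcont y (u + d) - pcont y (u + d).+1 * pcont (shift y u) d
  = (-c) ^+ d * pcont y u.
Proof.
elim: d => [|d IH]; first by rewrite pcont1 pcont0 addn0; ring.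
by rewrite (pcontSS (shift y u)) !addnS (pcontSS y) exprS -mulrA -IH /shift; ring.
Qed.

End Continuants.

Section FriezeEntries.
Variables (K : fieldType) (c : K).
Implicit Types (x y : int -> K).

Definition pcontz x (s : int) m := pcont c (fun t : nat => x (s + t%:Z)) m.

Lemma cont_window x (k : int) m : cont c (window x k m) = pcontz x k m.+1.
Proof.
rewrite /cont /pcontz pcontS /window size_map size_iota; congr (_.2).
apply: eq_cont_pair => t ht.
by rewrite (nth_map 0%N) ?size_iota // nth_iota.
Qed.

Lemma fval_pcontz x (i j : int) m : j = i + m%:Z - 2 -> fval c x i j = pcontz x i m.
Proof.
move=> ->; rewrite /fval; case: m => [|m].
  by rewrite (_ : i + 0%:Z - 2 - i + 1 = -1) //; lia.
by rewrite (_ : i + m.+1%:Z - 2 - i + 1 = Posz m) ?cont_window //; lia.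
Qed.

Lemma pcontz_shift x (s : int) k m :
  pcontz x (s + k%:Z) m = pcont c (shift (fun t : nat => x (s + t%:Z)) k) m.
Proof. by apply: eq_pcont => t _; rewrite /shift; congr x; lia. Qed.

Lemma fval_diag x (z : int) : fval c x z z = x z.
Proof. by rewrite (@fval_pcontz x z z 2) ?/pcontz ?pcont2 ?addr0 //; lia. Qed.

Lemma eq_fval x y (i j : int) : x =1 y -> fval c x i j = fval c y i j.
Proof. by move=> xy; rewrite /fval; case: (j - i + 1) => // m; congr cont; apply: eq_map. Qed.

Lemma fval_below_row0 x y (i j : int) : j - i <= -1 -> fval c x i j = fval c y i j.
Proof.
move=> hij; rewrite /fval; case E: (j - i + 1) => [m|//].
by rewrite (_ : m = 0%N) //; lia.
Qed.

Lemma fval_ptolemyL x (i l j : int) : i - 2 <= l -> l <= j ->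
  fval c x (i - 1) l * fval c x i j - fval c x (i - 1) j * fval c x i l
  = (-c) ^+ absz (l - i + 2)%R * fval c x (l + 2) j.
Proof.
move=> il lj; set a := absz (l - i + 2)%R; have [t et] : exists t : nat, j - l = t%:Z.
  by exists (absz (j - l)%R); lia.
rewrite (@fval_pcontz x (i - 1) l a.+1); last lia.
rewrite (@fval_pcontz x i j (a + t)); last lia.
rewrite (@fval_pcontz x (i - 1) j (a + t).+1); last lia.
rewrite (@fval_pcontz x i l a); last lia.
rewrite (@fval_pcontz x (l + 2) j t); last lia.
have shiftE (k : nat) (s : int) m : s = i - 1 + k%:Z ->
    pcontz x s m = pcont c (shift (fun t : nat => x (i - 1 + t%:Z)) k) m.
  by move=> ->; apply: pcontz_shift.
by rewrite !(@shiftE 1%N i) ?(@shiftE a.+1 (l + 2)) //; [apply: pcont_ptolemyL | lia..].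
Qed.

Lemma fval_ptolemyR x (i l j : int) : i <= l -> l <= j + 2 ->
  fval c x l (j + 1) * fval c x i j - fval c x i (j + 1) * fval c x l j
  = (-c) ^+ absz (j + 2 - l)%R * fval c x i (l - 2).
Proof.
move=> il lj; set d := absz (j + 2 - l)%R; have [u eu] : exists u : nat, l - i = u%:Z.
  by exists (absz (l - i)%R); lia.
rewrite (@fval_pcontz x l (j + 1) d.+1); last lia.
rewrite (@fval_pcontz x i j (u + d)); last lia.
rewrite (@fval_pcontz x i (j + 1) (u + d).+1); last lia.
rewrite (@fval_pcontz x l j d); last lia.
rewrite (@fval_pcontz x i (l - 2) u); last lia.
have -> : l = i + u%:Z by lia.
by rewrite !pcontz_shift; apply: pcont_ptolemyR.
Qed.

End FriezeEntries.

Section Agreement.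
Variables (K : fieldType) (c : K) (x y : int -> K).

Definition agree_below (i j : int) := forall a b : int,
  i <= a -> b <= j -> -2 <= b - a -> fval c x a b = fval c y a b.

Lemma agree_below_row0 (i : int) : agree_below i (i - 1).
Proof. by move=> a b ia bj _; apply: fval_below_row0; lia. Qed.

Lemma agree_below_diag (i j t : int) : agree_below i j -> t <= j - i ->
  0 <= t -> x (i + t) = y (i + t).
Proof. by move=> agr tj t0; rewrite -(fval_diag c x) -(fval_diag c y); apply: agr; lia. Qed.

(* One Ptolemy relation through (i, j) expresses the only new entry in terms
   of entries already known to agree, after division by f(i, j). *)
Lemma agree_below_left (i j : int) : agree_below i j -> -2 <= j - i ->
  fval c x i j != 0 -> fval c x (i - 1) j = fval c y (i - 1) j ->
  agree_below (i - 1) j.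
Proof.
move=> agr hij nzx eq_new a b ia bj hab.
have [ia'|ai] := lerP i a; first exact: agr.
have -> : a = i - 1 by lia.
have [hb|hb] := lerP b (i - 3); first by apply: fval_below_row0; lia.
have Lx := @fval_ptolemyL _ c x i b j; have Ly := @fval_ptolemyL _ c y i b j.
rewrite -(agr i b) -?(agr (b + 2) j) -?(agr i j) -?eq_new in Ly; try lia.
apply: (mulIf nzx); apply: (addIr (- (fval c x (i - 1) j * fval c x i b))).
by rewrite Lx ?Ly //; lia.
Qed.

Lemma agree_below_right (i j : int) : agree_below i j -> -2 <= j - i ->
  fval c x i j != 0 -> fval c x i (j + 1) = fval c y i (j + 1) ->
  agree_below i (j + 1).
Proof.
move=> agr hij nzx eq_new a b ia bj hab.
have [bj'|jb] := lerP b j; first exact: agr.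
have -> : b = j + 1 by lia.
have [ha|ha] := lerP (j + 3) a; first by apply: fval_below_row0; lia.
have Lx := @fval_ptolemyR _ c x i a j; have Ly := @fval_ptolemyR _ c y i a j.
rewrite -(agr a j) -?(agr i (a - 2)) -?(agr i j) -?eq_new in Ly; try lia.
apply: (mulIf nzx); apply: (addIr (- (fval c x i (j + 1) * fval c x a j))).
by rewrite Lx ?Ly //; lia.
Qed.

End Agreement.

Section Admissible.
Variables (K : fieldType) (c : K) (n : nat).
Hypothesis c0 : c != 0.
Implicit Types (x y : int -> K).

Lemma pcontz_admissible x (k : int) : admissible c n x -> pcontz c x k n.+3 = 0.
Proof. by move=> ax; rewrite -cont_window; apply: ax. Qed.

Lemma pcontz_admissible_neq0 x (k : int) : admissible c n x -> pcontz c x k n.+2 != 0.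
Proof.
move=> ax; have := @pcont_ptolemyL _ c (fun t : nat => x (k + t%:Z)) n.+1 1.
have := pcontz_admissible k ax; rewrite /pcontz addn1 => ->.
rewrite pcont1 mulr1 mul0r subr0 => E.
have : (-c) ^+ n.+1 != 0 by rewrite expf_neq0 // oppr_eq0.
by rewrite -E mulf_eq0 negb_or => /andP[].
Qed.

Lemma admissible_next x y (k : int) : admissible c n x -> admissible c n y ->
  (forall t : nat, (t <= n)%N -> x (k + t%:Z) = y (k + t%:Z)) ->
  x (k + n.+1%:Z) = y (k + n.+1%:Z).
Proof.
move=> ax ay xy.
have zx := pcontz_admissible k ax; have zy := pcontz_admissible k ay.
rewrite /pcontz pcontSS in zx; rewrite /pcontz pcontSS in zy.
have nzx := pcontz_admissible_neq0 k ax.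
have e2 : pcontz c x k n.+2 = pcontz c y k n.+2 by apply: eq_pcont => t; apply: xy.
have e1 : pcontz c x k n.+1 = pcontz c y k n.+1.
  by apply: eq_pcont => t /ltnW; apply: xy.
rewrite /pcontz in nzx e1 e2.
apply: (mulIf nzx); apply: (addIr (c * pcont c (fun t : nat => x (k + t%:Z)) n.+1)).
by rewrite zx [in RHS]e2 [in RHS]e1 zy.
Qed.

Lemma admissible_prev x y (k : int) : admissible c n x -> admissible c n y ->
  (forall t : nat, (t <= n)%N -> x (k + 1 + t%:Z) = y (k + 1 + t%:Z)) ->
  x k = y k.
Proof.
move=> ax ay xy.
have Lx := @pcont_ptolemyL _ c (fun t : nat => x (k + t%:Z)) 1 n.+1.
have Ly := @pcont_ptolemyL _ c (fun t : nat => y (k + t%:Z)) 1 n.+1.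
have zx := pcontz_admissible k ax; have zy := pcontz_admissible k ay.
rewrite /pcontz in zx zy.
rewrite add1n pcont2 pcont1 zx mul0r subr0 addr0 in Lx.
rewrite add1n pcont2 pcont1 zy mul0r subr0 addr0 in Ly.
have nzx := pcontz_admissible_neq0 (k + 1%:Z) ax; rewrite pcontz_shift in nzx.
have e2 : pcont c (shift (fun t : nat => x (k + t%:Z)) 1) n.+2
        = pcont c (shift (fun t : nat => y (k + t%:Z)) 1) n.+2.
  apply: eq_pcont => t ht; rewrite /shift.
  by have := xy t ht; rewrite (_ : k + 1 + t%:Z = k + (1 + t)%N%:Z) //; lia.
have e1 : pcont c (shift (fun t : nat => x (k + t%:Z)) 2) n.+1
        = pcont c (shift (fun t : nat => y (k + t%:Z)) 2) n.+1.
  apply: eq_pcont => t ht; rewrite /shift.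
  by have := xy t.+1 ht; rewrite (_ : k + 1 + t.+1%:Z = k + (2 + t)%N%:Z) //; lia.
by apply: (mulIf nzx); rewrite Lx [in RHS]e2 Ly e1.
Qed.

Lemma admissible_eq x y (k : int) : admissible c n x -> admissible c n y ->
  (forall t : nat, (t <= n)%N -> x (k + t%:Z) = y (k + t%:Z)) -> x =1 y.
Proof.
move=> ax ay xy.
have congr_x z z' : z = z' -> x z = y z -> x z' = y z' by move=> ->.
have fwd N t : (t <= n)%N -> x (k + N%:Z + t%:Z) = y (k + N%:Z + t%:Z).
  elim: N t => [|N IH] t tn; first by apply: (congr_x (k + t%:Z)); [lia | apply: xy].
  have [tn'|nt] := ltnP t n.
    by apply: (congr_x (k + N%:Z + t.+1%:Z)); [lia | apply: IH].
  by apply: (congr_x (k + N%:Z + n.+1%:Z)); [lia | apply: admissible_next].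
have bwd N t : (t <= n)%N -> x (k - N%:Z + t%:Z) = y (k - N%:Z + t%:Z).
  elim: N t => [|N IH] t tn; first by apply: (congr_x (k + t%:Z)); [lia | apply: xy].
  case: t tn => [|t] tn.
    apply: (congr_x (k - N.+1%:Z)); first lia.
    apply: admissible_prev => // t tn'.
    by apply: (congr_x (k - N%:Z + t%:Z)); [lia | apply: IH].
  by apply: (congr_x (k - N%:Z + t%:Z)); [lia | apply: IH; apply: ltnW].
move=> z; have [kz|zk] := lerP k z.
  by apply: (congr_x (k + (absz (z - k)%R)%:Z + 0%:Z)); [lia | apply: fwd].
by apply: (congr_x (k - (absz (k - z)%R)%:Z + 0%:Z)); [lia | apply: bwd].
Qed.

End Admissible.

Section Sections.
Variables (n : nat) (S : seq (int * int)).
Hypothesis secS : is_section n S.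

Lemma section_up (i j : int) : (i, j) \in S -> j - i <= n%:Z ->
  ((i - 1, j) \in S) || ((i, j + 1) \in S).
Proof.
case: secS => _ _ inBS up_down ijS hij.
have /andP[/= lo _] := inBS _ ijS.
by have [_ up] := up_down i j ijS; apply: up; rewrite /inB /=; lia.
Qed.

Lemma section_down (i j : int) : (i, j) \in S -> -1 <= j - i ->
  ((i, j - 1) \in S) || ((i + 1, j) \in S).
Proof.
case: secS => _ _ inBS up_down ijS hij.
have /andP[_ /= hi] := inBS _ ijS.
by have [down _] := up_down i j ijS; apply: down; rewrite /inB /=; lia.
Qed.

Lemma section_row0 : exists i j, (i, j) \in S /\ j - i = -1.
Proof.
have descend N : forall i j, (i, j) \in S -> j - i = N%:Z - 1 ->
    exists i j, (i, j) \in S /\ j - i = -1.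
  elim: N => [|N IH] i j ijS hij; first by exists i, j.
  by case/orP: (section_down ijS (ltac:(lia))) => /IH; apply; lia.
case: secS => _ sizeS inBS _.
have : nth (0, 0) S 0%N \in S by apply: mem_nth; rewrite sizeS addn4.
case: (nth _ S 0%N) => i j ijS; have /andP[/= lo /= hi] := inBS _ ijS.
have [row_neg|row_ge0] := lerP (j - i) (-2).
  by case/orP: (section_up ijS (ltac:(lia))) => pS; [exists (i - 1), j | exists i, (j + 1)];
    split=> //; lia.
by apply: (descend (absz (j - i + 1)%R) i j ijS); lia.
Qed.

End Sections.

Lemma section_agree_below (K : fieldType) (c : K) (n : nat) (S : seq (int * int))
    (x y : int -> K) :
  is_section n S ->
  (forall p, p \in S -> fval c x p.1 p.2 = fval c y p.1 p.2) ->
  (forall p, p \in S -> -1 <= p.2 - p.1 -> p.2 - p.1 <= n%:Z -> fval c x p.1 p.2 != 0) ->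
  exists i, agree_below c x y i (i + n.+1%:Z).
Proof.
move=> secS eqS nzS.
suff climb k : (k <= n.+2)%N -> exists i j,
    [/\ (i, j) \in S, j - i = k%:Z - 1 & agree_below c x y i j].
  by have [i [j [_ hij agr]]] := climb _ (leqnn _); exists i; rewrite (_ : _ + _ = j) //; lia.
elim: k => [_|k IH kn].
  have [i [j [ijS hij]]] := section_row0 secS.
  by exists i, j; split=> //; rewrite (_ : j = i - 1); [apply: agree_below_row0 | lia].
have [i [j [ijS hij agr]]] := IH (ltnW kn).
have nzx : fval c x i j != 0 by apply: (nzS (i, j)) => //=; lia.
case/orP: (section_up secS ijS (ltac:(lia))) => pS.
  exists (i - 1), j; split=> //; first lia.
  by apply: agree_below_left => //; [lia | apply: (eqS (_, _))].
exists i, (j + 1); split=> //; first lia.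
by apply: agree_below_right => //; [lia | apply: (eqS (_, _))].
Qed.

Theorem mainTheorem4 (K : fieldType) (c : K) (n : nat)
  (f g : int * int -> K) (S : seq (int * int)) :
  c != 0 -> (1 <= n)%N ->
  is_frieze c n f -> is_frieze c n g -> is_section n S ->
  (forall p, p \in S -> f p = g p) ->
  (forall p, p \in S -> (-1 : int) <= p.2 - p.1 -> p.2 - p.1 <= n%:Z -> f p != 0) ->
  forall p, inB n p -> f p = g p.
Proof.
move=> c0 _ [x [ax fx]] [y [ay gy]] secS eqS nzS.
have inBS p : p \in S -> inB n p by case: secS => _ _ inBS _; apply: inBS.
have [i agr] : exists i, agree_below c x y i (i + n.+1%:Z).
  apply: (section_agree_below secS) => [p pS | p pS lo hi].
    by rewrite -fx ?inBS // -gy ?inBS // eqS.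
  by rewrite -fx ?inBS ?nzS.
have xy : x =1 y.
  by apply: (admissible_eq c0 ax ay (k := i)) => t tn; apply: (agree_below_diag agr); lia.
by move=> p pB; rewrite fx // gy // (eq_fval _ _ _ xy).
Qed.
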